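(* Let $A$ be an algebra which is not $q_\omega$-compact. Then $\mathrm{pvar}(A)_\omega\neq \mathrm{qvar}(A)_\omega$, i.e. the class of finitely generated algebras in the prevariety generated by $A$ differs from the class of finitely generated algebras in the quasivariety generated by $A$. Moreover, there exists an ultrapower $B$ of $A$ that is not geometrically equivalent to $A$.
   Context: Let $\mathcal{V}=\mathrm{var}(A)$; for $n\geq1$, $X_n=\{x_1,\dots,x_n\}$ and $F_{\mathcal{V}}(X_n)$ is the relatively free algebra of $\mathcal{V}$ on $X_n$. For an algebra $D\in\mathcal{V}$ and $S\subseteq F_{\mathcal{V}}(X_n)^2$, $\mathrm{Rad}_D(S)$ is the set of all $(p,q)\in F_{\mathcal{V}}(X_n)^2$ such that every $d\in D^n$ with $p'(d)=q'(d)$ for all $(p',q')\in S$ also satisfies $p(d)=q(d)$. $A$ is $q_\omega$-compact if for every $n$, every $S\subseteq F_{\mathcal{V}}(X_n)^2$ and every $(p,q)\in\mathrm{Rad}_A(S)$ there is a finite $S_0\subseteq S$ with $(p,q)\in\mathrm{Rad}_A(S_0)$. A prevariety is a class closed under isomorphic copies, direct products and subalgebras; a quasivariety is a class axiomatized by quasi-identities (equivalently closed under isomorphic copies, subalgebras, direct products and ultraproducts). $\mathrm{pvar}(A)$ and $\mathrm{qvar}(A)$ are the smallest prevariety and quasivariety containing $A$; for a class $\mathfrak{X}$, $\mathfrak{X}_\omega$ is its subclass of finitely generated algebras. $A$ and $B$ are geometrically equivalent if $\mathrm{Rad}_A(S)=\mathrm{Rad}_B(S)$ for all $n$ and all $S\subseteq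 F_{\mathcal{V}}(X_n)^2$. *)

From Stdlib Require List.
From mathcomp Require Import all_boot.
Set Implicit Arguments. Unset Strict Implicit. Unset Printing Implicit Defensive.

Record signature := Signature { fsym : Type; arity : fsym -> nat }.

Record algebra (sg : signature) := Algebra {
  carrier :> Type;
  op : forall f : fsym sg, ('I_(arity f) -> carrier) -> carrier }.
Arguments op {sg} _ f _.

Inductive term (sg : signature) (n : nat) : Type :=
| Var : 'I_n -> term sg n
| App : forall f : fsym sg, ('I_(arity f) -> term sg n) -> term sg n.

Fixpoint eval {sg : signature} {n : nat} (A : algebra sg) (d : 'I_n -> A)
  (t : term sg n) {struct t} : A :=
  match t with
  | Var i => d i
  | App f ts => op A f (fun k => @eval sg n A d (ts k))
  end.
Arguments eval {sg n} A d t.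

Definition Rad (sg : signature) (n : nat) (D : algebra sg)
  (S : term sg n * term sg n -> Prop) (pq : term sg n * term sg n) : Prop :=
  forall d : 'I_n -> D,
    (forall pq', S pq' -> eval D d pq'.1 = eval D d pq'.2) ->
    eval D d pq.1 = eval D d pq.2.

Definition qw_compact (sg : signature) (A : algebra sg) : Prop :=
  forall (n : nat), 0 < n ->
  forall (S : term sg n * term sg n -> Prop) (pq : term sg n * term sg n),
    Rad A S pq ->
    exists S0 : seq (term sg n * term sg n),
      (forall x, List.In x S0 -> S x) /\ Rad A (fun x => List.In x S0) pq.

Definition geom_equiv (sg : signature) (A B : algebra sg) : Prop :=
  forall (n : nat), 0 < n ->
  forall (S : term sg n * term sg n -> Prop) (pq : term sg n * term sg n),
    Rad A S pq <-> Rad B S pq.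

Definition is_hom (sg : signature) (A B : algebra sg) (h : A -> B) : Prop :=
  forall (f : fsym sg) (a : 'I_(arity f) -> A), h (op A f a) = op B f (fun k => h (a k)).

Definition isomorphic (sg : signature) (A B : algebra sg) : Prop :=
  exists h : A -> B, is_hom h /\ bijective h.

Definition prod_alg (sg : signature) (I : Type) (Ai : I -> algebra sg) : algebra sg :=
  @Algebra sg (forall i : I, Ai i)
    (fun f a => fun i => op (Ai i) f (fun k => a k i)).

Definition power_alg (sg : signature) (A : algebra sg) (I : Type) : algebra sg :=
  prod_alg (fun _ : I => A).

Definition op_closed (sg : signature) (B : algebra sg) (P : B -> Prop) : Prop :=
  forall (f : fsym sg) (a : 'I_(arity f) -> B), (forall k, P (a k)) -> P (op B f a).

Definition sub_alg (sg : signature) (B : algebra sg) (P : B -> Prop)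
  (HP : op_closed P) : algebra sg :=
  @Algebra sg {x : B | P x}
    (fun f a => exist P (op B f (fun k => proj1_sig (a k)))
                        (HP f _ (fun k => proj2_sig (a k)))).

Definition is_prevariety (sg : signature) (K : algebra sg -> Prop) : Prop :=
  [/\ (forall B C : algebra sg, isomorphic B C -> K B -> K C),
      (forall (I : Type) (Ai : I -> algebra sg), (forall i, K (Ai i)) -> K (prod_alg Ai))
    & (forall (B : algebra sg) (P : B -> Prop) (HP : op_closed P), K B -> K (sub_alg HP))].

Definition pvar (sg : signature) (A : algebra sg) (D : algebra sg) : Prop :=
  forall K : algebra sg -> Prop, is_prevariety K -> K A -> K D.

Definition sat_qi (sg : signature) (D : algebra sg) (n : nat)
  (prem : seq (term sg n * term sg n)) (pq : term sg n * term sg n) : Prop :=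
  forall d : 'I_n -> D,
    (forall x, List.In x prem -> eval D d x.1 = eval D d x.2) ->
    eval D d pq.1 = eval D d pq.2.

(* qvar(A): the class axiomatized by all quasi-identities true in A
   (= the smallest quasivariety containing A) *)
Definition qvar (sg : signature) (A : algebra sg) (D : algebra sg) : Prop :=
  forall (n : nat) (prem : seq (term sg n * term sg n)) (pq : term sg n * term sg n),
    sat_qi A prem pq -> sat_qi D prem pq.

Definition fin_generated (sg : signature) (D : algebra sg) : Prop :=
  exists (n : nat) (g : 'I_n -> D), forall x : D, exists t : term sg n, eval D g t = x.

Definition ultrafilter (I : Type) (U : (I -> Prop) -> Prop) : Prop :=
  [/\ U (fun _ => True), ~ U (fun _ => False),
      (forall X Y : I -> Prop, U X -> (forall i, X i -> Y i) -> U Y),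
      (forall X Y : I -> Prop, U X -> U Y -> U (fun i => X i /\ Y i))
    & (forall X : I -> Prop, U X \/ U (fun i => ~ X i))].

(* B is (isomorphic to) the ultrapower A^I/U: there is a surjective
   homomorphism A^I -> B whose kernel is exactly the U-equivalence. *)
Definition is_ultrapower (sg : signature) (A B : algebra sg) : Prop :=
  exists (I : Type) (U : (I -> Prop) -> Prop), ultrafilter U /\
  exists h : power_alg A I -> B,
    [/\ is_hom h, (forall y : B, exists x, h x = y)
      & (forall x y : power_alg A I, h x = h y <-> U (fun i => x i = y i))].

From mathcomp Require Import all_boot.
From mathcomp Require Import boolp classical_sets filter.
Set Implicit Arguments. Unset Strict Implicit. Unset Printing Implicit Defensive.

(* Suppose Rad_A(S) contains (p, q) but no finite S0 ⊆ S has (p, q) in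
   Rad_A(S0).  For every finite S0 ⊆ S pick a point of A^n satisfying S0 but
   not p = q.  Along an ultrafilter on the finite subsets of S that contains
   every cone {S1 | S0 ⊆ S1}, these points define a point d of the ultrapower
   B satisfying all of S but not p = q; hence Rad_B(S) ≠ Rad_A(S).  The
   subalgebra C of B generated by d is finitely generated and lies in
   qvar(A), since ultrapowers and subalgebras preserve quasi-identities.  But
   every algebra D of pvar(A) has Rad_A(S) ⊆ Rad_D(S) for all S, because
   these D form a prevariety; evaluating at the generators of C shows that C
   fails this. *)

Lemma proj1_sig_inj (T : Type) (P : T -> Prop) (x y : {z : T | P z}) :
  proj1_sig x = proj1_sig y -> x = y.
Proof. by case: x y => x px [y py] /= xy; apply: eq_exist. Qed.

Lemma In_mem (T : eqType) (x : T) (s : seq T) : x \in s -> List.In x s.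
Proof. by elim: s => //= a s IH; rewrite in_cons => /orP [/eqP ->|/IH]; auto. Qed.

Section Evaluation.
Variable sg : signature.

Lemma eval_hom (A B : algebra sg) (h : A -> B) n (d : 'I_n -> A) t :
  is_hom h -> eval B (fun j => h (d j)) t = h (eval A d t).
Proof.
move=> hom_h; elim: t => [j|f ts IH] //=.
by rewrite hom_h; congr (op B f); apply: funext => k; exact: IH.
Qed.

Lemma eval_prod (I : Type) (Ai : I -> algebra sg) n (d : 'I_n -> prod_alg Ai) t i :
  eval (prod_alg Ai) d t i = eval (Ai i) (fun j => d j i) t.
Proof.
elim: t => [j|f ts IH] //=.
by congr (op (Ai i) f); apply: funext => k; exact: IH.
Qed.

Lemma eval_sub (B : algebra sg) (P : B -> Prop) (HP : op_closed P)
    n (d : 'I_n -> sub_alg HP) t :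
  proj1_sig (eval (sub_alg HP) d t) = eval B (fun j => proj1_sig (d j)) t.
Proof.
elim: t => [j|f ts IH] //=.
by congr (op B f); apply: funext => k; exact: IH.
Qed.

End Evaluation.

Section RadicalInclusion.
Variable sg : signature.

(* The class of D satisfying every infinitary quasi-identity of A. *)
Definition rad_included (A D : algebra sg) : Prop :=
  forall n (S : term sg n * term sg n -> Prop) pq, Rad A S pq -> Rad D S pq.

Lemma rad_included_prevariety (A : algebra sg) : is_prevariety (rad_included A).
Proof.
split.
- move=> B C [h [hom_h [g gh hg]]] KB n S pq RA d HS.
  have evC t : eval C d t = h (eval B (fun j => g (d j)) t).
    by rewrite -eval_hom //; congr (eval C _ t); apply: funext => j; rewrite hg.
  rewrite !evC; congr h; apply: (KB n S pq RA) => pq' /HS.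
  by rewrite !evC => /(f_equal g); rewrite !gh.
- move=> I Ai KA n S pq RA d HS; apply: functional_extensionality_dep => i.
  rewrite !eval_prod; apply: (KA i n S pq RA) => pq' /HS.
  by move/(f_equal (fun x => x i)); rewrite !eval_prod.
- move=> B P HP KB n S pq RA d HS; apply: proj1_sig_inj; rewrite !eval_sub.
  apply: (KB n S pq RA) => pq' /HS.
  by move/(f_equal (@proj1_sig _ _)); rewrite !eval_sub.
Qed.

Lemma pvar_rad_included (A D : algebra sg) : pvar A D -> rad_included A D.
Proof. by apply; [exact: rad_included_prevariety | move=> n S pq]. Qed.

Lemma qvar_sub_alg (A B : algebra sg) (P : B -> Prop) (HP : op_closed P) :
  qvar A B -> qvar A (sub_alg HP).
Proof.
move=> qB n prem pq satA d Hd; apply: proj1_sig_inj; rewrite !eval_sub.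
apply: (qB n prem pq satA) => x /Hd.
by move/(f_equal (@proj1_sig _ _)); rewrite !eval_sub.
Qed.

End RadicalInclusion.

Section GeneratedSubalgebra.
Variables (sg : signature) (B : algebra sg) (n : nat) (d : 'I_n -> B).

Definition generated (x : B) : Prop := exists t, eval B d t = x.

Lemma generated_closed : op_closed generated.
Proof.
move=> f a /(_ _)/cid gen_a.
exists (@App sg n f (fun k => projT1 (gen_a k))) => /=.
by congr (op B f); apply: funext => k; exact: projT2 (gen_a k).
Qed.

Definition gen_alg : algebra sg := sub_alg generated_closed.

Definition gen_of (j : 'I_n) : gen_alg :=
  exist generated (d j) (ex_intro _ (@Var sg n j) erefl).

Lemma eval_gen t : proj1_sig (eval gen_alg gen_of t) = eval B d t.
Proof. exact: eval_sub. Qed.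

Lemma gen_alg_fin_generated : fin_generated gen_alg.
Proof.
by exists n, gen_of => -[x [t tx]]; exists t; apply: proj1_sig_inj; rewrite eval_gen.
Qed.

Lemma Rad_gen_alg S pq : Rad gen_alg S pq ->
  (forall pq', S pq' -> eval B d pq'.1 = eval B d pq'.2) -> eval B d pq.1 = eval B d pq.2.
Proof.
move=> RS dS; rewrite -(eval_gen pq.1) -(eval_gen pq.2) (RS gen_of) // => pq' /dS.
by rewrite -(eval_gen pq'.1) -(eval_gen pq'.2); exact: proj1_sig_inj.
Qed.

End GeneratedSubalgebra.

Lemma ultrafilter_extending (J T : Type) (base : J -> T -> Prop) : J ->
  (forall j, exists x, base j x) ->
  (forall i j, exists k, forall x, base k x -> base i x /\ base j x) ->
  exists U, ultrafilter U /\ forall j, U (base j).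
Proof.
move=> j0 base_n0 base_dir.
have Fbase : Filter (filter_from setT base).
  apply: filter_fromT_filter; first by exists j0.
  by move=> i j; have [k Hk] := base_dir i j; exists k => x /Hk.
have [G [ultraG baseG]] := ultraFilterLemma (filter_from_proper Fbase (fun j _ => base_n0 j)).
exists G; split; last by move=> j; apply: baseG; exists j.
split.
- exact: filterT.
- exact: filter_not_empty.
- by move=> X Y GX XY; apply: filterS GX.
- by move=> X Y; apply: filterI.
- by move=> X; exact: in_ultra_setVsetC.
Qed.

Section Ultrapower.
Variables (sg : signature) (A : algebra sg) (I : Type) (U : (I -> Prop) -> Prop).
Hypothesis ultraU : ultrafilter U.

Lemma ultra_sub (X Y : I -> Prop) : U X -> (forall i, X i -> Y i) -> U Y.
Proof. by case: ultraU => _ _ US _ _ UX /US; apply. Qed.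

Lemma ultra_all_In (T : Type) (l : seq T) (X : T -> I -> Prop) :
  (forall t, List.In t l -> U (X t)) -> U (fun i => forall t, List.In t l -> X t i).
Proof.
case: ultraU => UT _ _ UI _; elim: l => [|a l IH] UX.
  by apply: (ultra_sub UT) => i _ t [].
apply: (ultra_sub (UI _ _ (UX a (or_introl erefl)) (IH (fun t lt => UX t (or_intror lt))))).
by move=> i [Xa Xl] t /= [<-|]; auto.
Qed.

Lemma ultra_all_ord (m : nat) (X : 'I_m -> I -> Prop) :
  (forall k, U (X k)) -> U (fun i => forall k, X k i).
Proof.
move=> UX; apply: (ultra_sub (ultra_all_In (l := enum 'I_m) (fun k _ => UX k))).
by move=> i Xi k; apply: Xi; apply: In_mem; rewrite mem_enum.
Qed.

(* The ultrapower is built as a set of classes, each class a predicate on A^I. *)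
Definition ueq (x y : I -> A) : Prop := U (fun i => x i = y i).

Definition ultra_car := {P : (I -> A) -> Prop | exists x, P = ueq x}.

Definition cls (x : I -> A) : ultra_car := exist _ (ueq x) (ex_intro _ x erefl).

Definition rep (b : ultra_car) : I -> A := projT1 (cid (proj2_sig b)).

Lemma cls_rep b : cls (rep b) = b.
Proof. by apply: proj1_sig_inj; rewrite /rep; case: cid => x /= ->. Qed.

Lemma cls_eq x y : cls x = cls y <-> ueq x y.
Proof.
case: ultraU => UT _ _ UI _.
have ueq_refl z : ueq z z by apply: (ultra_sub UT).
have ueq_sym z w : ueq z w -> ueq w z by move/ultra_sub; apply.
have ueq_trans z w v : ueq z w -> ueq w v -> ueq z v.
  by move=> zw wv; apply: (ultra_sub (UI _ _ zw wv)) => i [-> ->].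
split; first by move/(f_equal (@proj1_sig _ _)) => /= ->; exact: ueq_refl.
move=> xy; apply: proj1_sig_inj; apply: funext => z; apply: propext.
by split; [apply: ueq_trans; exact: ueq_sym | exact: ueq_trans].
Qed.

Definition ultrapower : algebra sg :=
  @Algebra sg ultra_car (fun f a => cls (op (power_alg A I) f (fun k => rep (a k)))).

Lemma cls_hom : @is_hom sg (power_alg A I) ultrapower cls.
Proof.
move=> f a /=; apply/cls_eq.
have rep_cls k : ueq (a k) (rep (cls (a k))) by apply/cls_eq; rewrite cls_rep.
apply: (ultra_sub (ultra_all_ord rep_cls)) => i Hi /=.
by congr (op A f); apply: funext => k; exact: Hi.
Qed.

Lemma ultrapowerP : is_ultrapower A ultrapower.
Proof.
exists I, U; split => //; exists cls; split; [exact: cls_hom | | exact: cls_eq].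
by move=> y; exists (rep y); exact: cls_rep.
Qed.

Lemma eval_ultrapower n (x : 'I_n -> I -> A) t :
  eval ultrapower (fun j => cls (x j)) t = cls (fun i => eval A (fun j => x j i) t).
Proof.
rewrite (@eval_hom sg (power_alg A I) ultrapower cls n x t cls_hom).
by congr cls; apply: funext => i; exact: (@eval_prod sg I (fun _ => A)).
Qed.

(* Łoś's theorem for quasi-identities. *)
Lemma qvar_ultrapower : qvar A ultrapower.
Proof.
move=> m prem pq satA c Hc.
pose x j := rep (c j).
have evc t : eval ultrapower c t = cls (fun i => eval A (fun j => x j i) t).
  by rewrite -eval_ultrapower; congr (eval _ _ t); apply: funext => j; rewrite cls_rep.
have prem_ae y : List.In y prem ->
    U (fun i => eval A (fun j => x j i) y.1 = eval A (fun j => x j i) y.2).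
  by move/Hc; rewrite !evc => /cls_eq.
rewrite !evc; apply/cls_eq; apply: (ultra_sub (ultra_all_In prem_ae)) => i.
exact: satA.
Qed.

End Ultrapower.

Lemma not_qw_compact_witness (sg : signature) (A : algebra sg) :
  ~ qw_compact A ->
  exists n, 0 < n /\ exists S pq, Rad A S pq /\
    forall S0 : seq (term sg n * term sg n),
      (forall x, List.In x S0 -> S x) -> ~ Rad A (fun x => List.In x S0) pq.
Proof.
move=> not_compact; apply: contrapT => no_witness; apply: not_compact => n n0 S pq RA.
apply: contrapT => no_finite; apply: no_witness; exists n; split => //.
by exists S, pq; split => // S0 S0S RS0; apply: no_finite; exists S0.
Qed.

Lemma ultrapower_separating_point (sg : signature) (A : algebra sg) n
    (S : term sg n * term sg n -> Prop) (pq : term sg n * term sg n) :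
  (forall S0 : seq (term sg n * term sg n),
      (forall x, List.In x S0 -> S x) -> ~ Rad A (fun x => List.In x S0) pq) ->
  exists (I : Type) (U : (I -> Prop) -> Prop), ultrafilter U /\
  exists d : 'I_n -> ultrapower A U,
    (forall pq', S pq' -> eval _ d pq'.1 = eval _ d pq'.2) /\
    eval _ d pq.1 <> eval _ d pq.2.
Proof.
move=> no_finite.
pose I := {s : seq (term sg n * term sg n) | forall x, List.In x s -> S x}.
have separating (i : I) : exists d : 'I_n -> A,
    (forall x, List.In x (proj1_sig i) -> eval A d x.1 = eval A d x.2) /\
    eval A d pq.1 <> eval A d pq.2.
  by case: i => s sS; have /existsNP [d /not_implyP] := no_finite s sS; exists d.
have [w wP] := choice separating.
pose cone (i j : I) := forall x, List.In x (proj1_sig i) -> List.In x (proj1_sig j).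
have cone_dir i j : exists k, forall l, cone k l -> cone i l /\ cone j l.
  case: i j => [s sS] [t tS].
  have stS x : List.In x (s ++ t) -> S x.
    by case/(List.in_app_or s t x); [exact: sS | exact: tS].
  by exists (exist _ (s ++ t) stS) => l stl; split=> x xl; apply: stl;
    apply: List.in_or_app; auto.
have empty : I by exists [::] => x [].
have [U [ultraU Ucone]] :=
  ultrafilter_extending empty (fun i => ex_intro _ i (fun x xi => xi)) cone_dir.
pose d j := cls U (fun i => w i j).
have evd t : eval (ultrapower A U) d t = cls U (fun i => eval A (w i) t).
  exact: (eval_ultrapower ultraU).
exists I, U; split => //; exists d; split.
- move=> pq' Spq'; rewrite !evd; apply/(cls_eq ultraU).
  have pq'S x : List.In x [:: pq'] -> S x by case=> [<-|[]].
  apply: (ultra_sub ultraU (Ucone (exist _ [:: pq'] pq'S))) => i coi.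
  by apply: (proj1 (wP i)); apply: coi; left.
- rewrite !evd => /(cls_eq ultraU) Ueq; case: (ultraU) => _ U0 _ _ _.
  by apply: U0; apply: (ultra_sub ultraU Ueq) => i; exact: (proj2 (wP i)).
Qed.

Theorem mainTheorem4 (sg : signature) (A : algebra sg) :
  ~ qw_compact A ->
  ~ (forall D : algebra sg,
        (pvar A D /\ fin_generated D) <-> (qvar A D /\ fin_generated D)) /\
  exists B : algebra sg, is_ultrapower A B /\ ~ geom_equiv A B.
Proof.
move=> /not_qw_compact_witness [n [n0 [S [pq [RA no_finite]]]]].
have [I [U [ultraU [d [dS dpq]]]]] := ultrapower_separating_point no_finite.
split; last first.
  exists (ultrapower A U); split; first exact: ultrapowerP.
  by move=> geq; apply/dpq/(proj1 (geq n n0 S pq) RA).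
move=> same_classes.
have qC : qvar A (gen_alg d) by apply/qvar_sub_alg/qvar_ultrapower.
have [pC _] := proj2 (same_classes _) (conj qC (gen_alg_fin_generated d)).
have RC : Rad (gen_alg d) S pq by apply: pvar_rad_included pC _ _ _ RA.
exact/dpq/(Rad_gen_alg RC).
Qed.
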